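(* Let $\Gamma$ be a locally finite connected graph, let $B\subseteq\Gamma$ be finite, and let $A\in\mathcal{A}(B)$. Then the shadow $\partial A=\{\overline f\in\partial_h\Gamma:\overline f\text{ agrees with }\overline d_A\text{ on }B\}$ is nonempty if and only if $A$ is infinite.
   Context: $\Gamma$ is identified with its vertex set with path metric $d$, and $d_x(y)=d(x,y)$. $\overline F(\Gamma,\mathbb{Z})$ is the quotient of $\mathbb{Z}^\Gamma$ (product topology) by the constant functions. The horofunction boundary $\partial_h\Gamma$ is the set of limit points of $\{\overline{d_x}:x\in\Gamma\}$ in $\overline F(\Gamma,\mathbb{Z})$. Two classes agree on $B$ if representatives differ by a constant on $B$. For finite $B$ and $x\in\Gamma$, the atom of $x$ is $\{y: d_y-d_x\text{ is constant on }B\}$. $\mathcal{A}(B)$ is the set of atoms, and $\overline d_A$ is the common restriction to $B$, modulo constants, of $d_x$ for $x\in A$. *)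

From Stdlib Require Import ZArith List ClassicalEpsilon.
Open Scope Z_scope.

Section Graph.
Context {V : Type} (adj : V -> V -> Prop).

Inductive walk : nat -> V -> V -> Prop :=
| walk_nil x : walk 0 x x
| walk_cons n x y z : adj x y -> walk n y z -> walk (S n) x z.

Definition locally_finite : Prop :=
  forall x, exists l : list V, forall y, adj x y -> In y l.

Definition connected : Prop := forall x y, exists n, walk n x y.

Definition is_dist (x y : V) (n : nat) : Prop :=
  walk n x y /\ forall m, walk m x y -> (n <= m)%nat.

(* the path metric d (well defined when the graph is connected) *)
Definition dist (x y : V) : nat :=
  epsilon (inhabits 0%nat) (fun n => is_dist x y n).

Definition dfun (x : V) : V -> Z := fun y => Z.of_nat (dist x y).

(* classes of f and g in F(Gamma,Z) = Z^Gamma / constants agree on B *)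
Definition agree_on (B : list V) (f g : V -> Z) : Prop :=
  exists c, forall b, In b B -> f b - g b = c.

Definition same_class (f g : V -> Z) : Prop :=
  exists c, forall y, f y - g y = c.

(* the class of f is a limit (accumulation) point of {class of d_x : x in Gamma}
   in the quotient of the product topology; basic neighbourhoods of the class of f
   are the classes agreeing with it on a finite set B. *)
Definition in_horo_boundary (f : V -> Z) : Prop :=
  forall B : list V, exists x, agree_on B (dfun x) f /\ ~ same_class (dfun x) f.

Definition atom (B : list V) (x : V) : V -> Prop :=
  fun y => agree_on B (dfun y) (dfun x).

Definition is_atom (B : list V) (A : V -> Prop) : Prop :=
  exists x, forall y, A y <-> atom B x y.

Definition in_shadow (B : list V) (A : V -> Prop) (f : V -> Z) : Prop :=
  in_horo_boundary f /\ forall a, A a -> agree_on B f (dfun a).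

End Graph.

Definition finite_set {V : Type} (A : V -> Prop) : Prop :=
  exists l : list V, forall y, A y -> In y l.

From Stdlib Require Import ZArith List Lia Wf_nat Classical ClassicalEpsilon.
Open Scope Z_scope.

(* If [A] is finite, finitely many coordinates separate a boundary point [f] from
   every [d_a], a in A; a distance function [d_x] close to [f] on these coordinates
   and on [B] lies in [A] (agreeing with [f] on [B] is the atom condition), which
   is absurd.
   Conversely, fix [o] in [A] and look at the normalised functions
   [d_x - d_x(o)], x in A: on a vertex [v] they take at most [2 d(o,v) + 1]
   values.  Exhausting the graph by balls around [o] and choosing at each step a
   value realised by arbitrarily far points of [A] (pigeonhole, i.e. Koenig's
   lemma) gives a limit [f] of points of [A] escaping to infinity.  It is not the
   class of any [d_z], since [d_x] agreeing with [d_z] on [z] and its neighbours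
   forces [x = z]. *)

Section Walks.
Context {V : Type} (adj : V -> V -> Prop).

Lemma walk_snoc n x y z : walk adj n x y -> adj y z -> walk adj (S n) x z.
Proof.
  induction 1; intros.
  - econstructor; eauto. constructor.
  - econstructor; eauto.
Qed.

Lemma walk_last n x z : walk adj (S n) x z -> exists y, walk adj n x y /\ adj y z.
Proof.
  revert x. induction n; intros x H; inversion H as [|n0 x0 y0 z0 Hxy Hw]; subst.
  - inversion Hw; subst. exists x. split; [constructor | auto].
  - destruct (IHn _ Hw) as (w & Hw1 & Hw2). exists w. split; auto. econstructor; eauto.
Qed.

Lemma walk_app a b x y z : walk adj a x y -> walk adj b y z -> walk adj (a + b) x z.
Proof. induction 1; intros; simpl; auto. econstructor; eauto. Qed.

Hypothesis adj_sym : forall x y, adj x y -> adj y x.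

Lemma walk_rev n x y : walk adj n x y -> walk adj n y x.
Proof. induction 1; [constructor | eapply walk_snoc; eauto]. Qed.

End Walks.

Section PathMetric.
Context {V : Type} (adj : V -> V -> Prop).
Hypothesis adj_conn : connected adj.

Lemma dist_is_dist x y : is_dist adj x y (dist adj x y).
Proof.
  unfold dist. apply epsilon_spec.
  destruct (dec_inh_nat_subset_has_unique_least_element (fun n => walk adj n x y))
    as (n & Hn & _).
  - intro n. apply classic.
  - apply adj_conn.
  - exists n. exact Hn.
Qed.

Lemma dist_walk x y : walk adj (dist adj x y) x y.
Proof. apply dist_is_dist. Qed.

Lemma dist_le_walk x y m : walk adj m x y -> (dist adj x y <= m)%nat.
Proof. apply dist_is_dist. Qed.

Lemma dist_xx x : dist adj x x = 0%nat.
Proof. pose proof (dist_le_walk x x 0 (walk_nil _ x)). lia. Qed.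

Lemma dist_triangle x y z : (dist adj x z <= dist adj x y + dist adj y z)%nat.
Proof. apply dist_le_walk. eapply walk_app; apply dist_walk. Qed.

Hypothesis adj_sym : forall x y, adj x y -> adj y x.

Lemma dist_sym x y : dist adj x y = dist adj y x.
Proof.
  apply Nat.le_antisymm; apply dist_le_walk, walk_rev, dist_walk; auto.
Qed.

Lemma dfun_diff_bound x o v :
  - Z.of_nat (dist adj o v) <= dfun adj x v - dfun adj x o <= Z.of_nat (dist adj o v).
Proof.
  unfold dfun.
  pose proof (dist_triangle x o v). pose proof (dist_triangle x v o).
  rewrite (dist_sym v o) in *. lia.
Qed.

(* The vertex [z] is the unique strict minimum of [d_z] on its closed neighbourhood,
   while [d_x] has a strictly smaller value on the neighbour of [z] along a
   geodesic from [x]. *)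
Lemma dfun_agree_nbhd_eq (nbz : list V) z x :
  (forall y, adj z y -> In y nbz) ->
  agree_on (z :: nbz) (dfun adj x) (dfun adj z) -> x = z.
Proof.
  intros Hnb [c Hc]. apply NNPP. intro Hne.
  pose proof (dist_walk x z) as Hw.
  destruct (dist adj x z) as [|k] eqn:Ek.
  - inversion Hw; subst; auto.
  - destruct (walk_last adj _ _ _ Hw) as (y & Hwy & Hyz).
    pose proof (dist_le_walk _ _ _ Hwy).
    pose proof (Hc z (or_introl eq_refl)) as Hcz.
    pose proof (Hc y (or_intror (Hnb y (adj_sym _ _ Hyz)))) as Hcy.
    unfold dfun in Hcz, Hcy. rewrite Ek, dist_xx in Hcz. lia.
Qed.

End PathMetric.

Section AgreeOn.
Context {V : Type}.

Lemma agree_on_sym (B : list V) f g : agree_on B f g -> agree_on B g f.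
Proof. intros [c Hc]. exists (- c). intros b Hb. specialize (Hc b Hb). lia. Qed.

Lemma agree_on_trans (B : list V) f g h :
  agree_on B f g -> agree_on B g h -> agree_on B f h.
Proof.
  intros [c Hc] [d Hd]. exists (c + d). intros b Hb.
  specialize (Hc b Hb). specialize (Hd b Hb). lia.
Qed.

Lemma agree_on_incl (B B' : list V) f g : incl B B' -> agree_on B' f g -> agree_on B f g.
Proof. intros H [c Hc]. exists c. auto. Qed.

Lemma not_same_class_separated (f g : V -> Z) :
  ~ same_class f g -> exists L, ~ agree_on L f g.
Proof.
  intros Hfg. apply NNPP. intro Hsep. apply Hfg.
  destruct (classic (exists x : V, True)) as [[x _] | Hemp].
  - exists (f x - g x). intro y. apply NNPP. intro Hy. apply Hsep.
    exists (y :: x :: nil). intros [c Hc]. apply Hy. rewrite (Hc y), (Hc x); simpl; auto.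
  - exists 0. intro y. exfalso. eauto.
Qed.

Lemma separate_finitely (h : V -> V -> Z) (f : V -> Z) (l : list V) :
  exists L, forall a, In a l -> ~ same_class (h a) f -> ~ agree_on L (h a) f.
Proof.
  induction l as [|a l [L HL]].
  - exists nil. intros a [].
  - destruct (classic (same_class (h a) f)) as [Hs | Hns].
    + exists L. intros a' [<- | Ha']; auto.
    + destruct (not_same_class_separated _ _ Hns) as [La HLa].
      exists (La ++ L). intros a' [<- | Ha'] Hns' Hag.
      * apply HLa. eapply agree_on_incl; [|exact Hag]. apply incl_appl, incl_refl.
      * apply (HL a' Ha' Hns'). eapply agree_on_incl; [|exact Hag]. apply incl_appr, incl_refl.
Qed.

End AgreeOn.

Lemma atom_self {V} (adj : V -> V -> Prop) B x : atom adj B x x.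
Proof. exists 0. intros. lia. Qed.

Lemma atom_infinite_of_shadow {V} (adj : V -> V -> Prop) B A f :
  is_atom adj B A -> in_shadow adj B A f -> ~ finite_set A.
Proof.
  intros [o Ho] [Hbd Hsh] [lA HlA].
  assert (Ao : A o) by (apply Ho, atom_self).
  destruct (separate_finitely (dfun adj) f lA) as [L HL].
  destruct (Hbd (B ++ L)) as (x & Hag & Hns).
  assert (Ax : A x).
  { apply Ho. eapply agree_on_trans.
    - eapply agree_on_incl; [|exact Hag]. apply incl_appl, incl_refl.
    - apply Hsh, Ao. }
  apply (HL x (HlA x Ax) Hns). eapply agree_on_incl; [|exact Hag]. apply incl_appr, incl_refl.
Qed.

Lemma pigeonhole_cofinal (P : Z -> nat -> Prop)
  (P_antitone : forall c m m', (m <= m')%nat -> P c m' -> P c m) (k : nat) (lo : Z) :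
  (forall m, exists c, lo <= c <= lo + Z.of_nat k /\ P c m) -> exists c, forall m, P c m.
Proof.
  induction k; intros H.
  - exists lo. intros m. destruct (H m) as (c & Hc & Pc). replace lo with c by lia. auto.
  - destruct (classic (forall m, P (lo + Z.of_nat (S k)) m)) as [Hall | Hno]; [eauto|].
    apply not_all_ex_not in Hno as [m0 Hm0].
    apply IHk. intros m. destruct (H (Nat.max m m0)) as (c & Hc & Pc).
    exists c. destruct (Z.eq_dec c (lo + Z.of_nat (S k))) as [-> | Hne].
    + exfalso. apply Hm0. eapply P_antitone; [|exact Pc]. lia.
    + split; [lia|]. eapply P_antitone; [|exact Pc]. lia.
Qed.

(* A dependent-choice construction: the successive extensions agree on the
   previous stage, so their pointwise limit (read at the stage [idx y] of [y])
   satisfies [Q] at every stage. *)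
Lemma glue_along_exhaustion {V} (L : nat -> list V) (Q : list V -> (V -> Z) -> Prop)
  (idx : V -> nat) (L_idx : forall y, In y (L (idx y)))
  (L_mono : forall a b y, (a <= b)%nat -> In y (L a) -> In y (L b))
  (Q_local : forall S f g, Q S g -> (forall y, In y S -> f y = g y) -> Q S f)
  (Q0 : exists f, Q (L 0%nat) f)
  (QS : forall n f, Q (L n) f -> exists f', Q (L (S n)) f' /\ forall y, In y (L n) -> f' y = f y) :
  exists f, forall n, Q (L n) f.
Proof.
  destruct (constructive_indefinite_description _ Q0) as [f0 Hf0].
  pose (step := fun n (s : {f | Q (L n) f}) =>
     constructive_indefinite_description _ (QS n (proj1_sig s) (proj2_sig s))).
  pose (F := nat_rect (fun n => {f | Q (L n) f}) (exist _ f0 Hf0)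
     (fun n s => exist _ (proj1_sig (step n s)) (proj1 (proj2_sig (step n s))))).
  assert (F_succ : forall n y, In y (L n) -> proj1_sig (F (S n)) y = proj1_sig (F n) y).
  { intros n y Hy. apply (proj2 (proj2_sig (step n (F n)))), Hy. }
  assert (F_stable : forall a d y, In y (L a) -> proj1_sig (F (d + a)%nat) y = proj1_sig (F a) y).
  { intros a d y Hy. induction d; auto. simpl plus. rewrite F_succ; auto.
    apply (L_mono a); auto. lia. }
  exists (fun y => proj1_sig (F (idx y)) y).
  intros n. apply Q_local with (proj1_sig (F n)); [apply proj2_sig|].
  intros y Hy. destruct (Nat.le_ge_cases (idx y) n).
  - replace n with ((n - idx y) + idx y)%nat by lia. rewrite F_stable; auto.
  - replace (idx y) with ((idx y - n) + n)%nat by lia. rewrite F_stable; auto.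
Qed.

Section Balls.
Context {V : Type} (adj : V -> V -> Prop) (nb : V -> list V).
Hypothesis nb_adj : forall x y, adj x y -> In y (nb x).
Hypothesis adj_conn : connected adj.

Fixpoint ball (o : V) (n : nat) : list V :=
  match n with
  | 0%nat => o :: nil
  | S n => ball o n ++ flat_map nb (ball o n)
  end.

Lemma ball_mono o a b y : (a <= b)%nat -> In y (ball o a) -> In y (ball o b).
Proof. induction 1; auto. intros Hy. simpl. apply in_or_app; auto. Qed.

Lemma walk_in_ball o k y : walk adj k o y -> In y (ball o k).
Proof.
  revert y. induction k; intros y Hw.
  - inversion Hw; subst. simpl; auto.
  - destruct (walk_last adj _ _ _ Hw) as (w & Hw1 & Hw2). simpl. apply in_or_app; right.
    apply in_flat_map. exists w. split; auto.
Qed.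

Lemma in_ball_dist o y : In y (ball o (dist adj o y)).
Proof. apply walk_in_ball, dist_walk, adj_conn. Qed.

Lemma incl_ball o (S : list V) : exists N, incl S (ball o N).
Proof.
  induction S as [|a S [N HN]].
  - exists 0%nat. intros y [].
  - exists (Nat.max N (dist adj o a)). intros y [<- | Hy].
    + eapply ball_mono; [|apply in_ball_dist]. lia.
    + eapply ball_mono; [|apply HN; auto]. lia.
Qed.

Lemma infinite_unbounded o (A : V -> Prop) :
  ~ finite_set A -> forall m, exists x, A x /\ (m <= dist adj o x)%nat.
Proof.
  intros Hinf m. apply NNPP. intro Hn. apply Hinf. exists (ball o m).
  intros y Ay. eapply ball_mono; [|apply in_ball_dist].
  destruct (Nat.le_gt_cases m (dist adj o y)); [exfalso; eauto | lia].
Qed.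

End Balls.

Section FarLimits.
Context {V : Type} (adj : V -> V -> Prop).
Hypothesis adj_sym : forall x y, adj x y -> adj y x.
Hypothesis adj_lf : locally_finite adj.
Hypothesis adj_conn : connected adj.
Variables (A : V -> Prop) (o : V).

Definition far_limit_on (S : list V) (f : V -> Z) : Prop :=
  forall m, exists x, A x /\ (m <= dist adj o x)%nat /\
    forall y, In y S -> dfun adj x y - dfun adj x o = f y.

Lemma far_limit_on_incl S S' f : incl S S' -> far_limit_on S' f -> far_limit_on S f.
Proof. intros HS Hf m. destruct (Hf m) as (x & Ax & Hm & Hx). exists x. auto. Qed.

Lemma far_limit_on_local S f g :
  far_limit_on S g -> (forall y, In y S -> f y = g y) -> far_limit_on S f.
Proof.
  intros Hg Hfg m. destruct (Hg m) as (x & Ax & Hm & Hx). exists x.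
  repeat split; auto. intros y Hy. rewrite Hfg; auto.
Qed.

Lemma far_limit_on_cons S f v : far_limit_on S f ->
  exists f', far_limit_on (v :: S) f' /\ forall y, In y S -> f' y = f y.
Proof.
  intros Hf. set (d := dist adj o v).
  destruct (pigeonhole_cofinal (fun c m => exists x, A x /\ (m <= dist adj o x)%nat /\
       (forall y, In y S -> dfun adj x y - dfun adj x o = f y) /\ dfun adj x v - dfun adj x o = c)
     ltac:(intros c m m' Hmm' (x & Ax & Hm & HS & Hv); exists x; repeat split; auto; lia)
     (2 * d) (- Z.of_nat d)) as [c Hc].
  - intros m. destruct (Hf m) as (x & Ax & Hm & HS). exists (dfun adj x v - dfun adj x o).
    pose proof (dfun_diff_bound adj adj_conn adj_sym x o v). split; [lia|]. exists x. auto.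
  - exists (fun y => if excluded_middle_informative (y = v) then c else f y). split.
    + intros m. destruct (Hc m) as (x & Ax & Hm & HS & Hv). exists x. split; [|split]; auto.
      intros y Hy. destruct (excluded_middle_informative (y = v)) as [-> | Hne]; auto.
      destruct Hy as [<- | Hy]; [congruence | auto].
    + intros y Hy. destruct (excluded_middle_informative (y = v)) as [-> |]; auto.
      destruct (Hc 0%nat) as (x & _ & _ & HS & Hv). rewrite <- Hv. auto.
Qed.

Lemma far_limit_on_app l S f : far_limit_on S f ->
  exists f', far_limit_on (l ++ S) f' /\ forall y, In y S -> f' y = f y.
Proof.
  revert S f. induction l as [|a l IH]; intros S f Hf.
  - exists f. auto.
  - destruct (IH S f Hf) as (f1 & H1 & H1S). destruct (far_limit_on_cons _ _ a H1) as (f2 & H2 & H2S).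
    exists f2. split; auto. intros y Hy. rewrite H2S; auto. apply in_or_app; auto.
Qed.

Lemma far_limit_exists : ~ finite_set A -> exists f, forall S, far_limit_on S f.
Proof.
  intros Hinf.
  pose (nb := fun x => proj1_sig (constructive_indefinite_description _ (adj_lf x))).
  assert (nb_adj : forall x y, adj x y -> In y (nb x))
    by (intros x; exact (proj2_sig (constructive_indefinite_description _ (adj_lf x)))).
  assert (far_nil : far_limit_on nil (fun _ => 0)).
  { intros m. destruct (infinite_unbounded adj nb nb_adj adj_conn o A Hinf m) as (x & Ax & Hm).
    exists x. repeat split; auto. intros y []. }
  destruct (glue_along_exhaustion (ball nb o) far_limit_on (dist adj o)
              (in_ball_dist adj nb nb_adj adj_conn o) (ball_mono nb o) far_limit_on_local)
    as [f Hf].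
  - destruct (far_limit_on_app (ball nb o 0) _ _ far_nil) as (f & Hf & _).
    exists f. rewrite app_nil_r in Hf. exact Hf.
  - intros n g Hg. destruct (far_limit_on_app (ball nb o (S n)) _ _ Hg) as (f' & H1 & H2).
    exists f'. split; auto. eapply far_limit_on_incl; [|exact H1]. apply incl_appl, incl_refl.
  - exists f. intros S. destruct (incl_ball adj nb nb_adj adj_conn o S) as [N HN].
    eapply far_limit_on_incl; [exact HN | apply Hf].
Qed.

Lemma far_limit_not_same_class f :
  (forall S, far_limit_on S f) -> forall z, ~ same_class (dfun adj z) f.
Proof.
  intros Hf z [c Hc]. destruct (adj_lf z) as [nbz Hnbz].
  destruct (Hf (z :: nbz) (S (dist adj o z))) as (x & Ax & Hm & Hx).
  assert (x = z) as ->.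
  { apply (dfun_agree_nbhd_eq adj adj_conn adj_sym nbz z x Hnbz).
    exists (dfun adj x o - c). intros b Hb. specialize (Hx b Hb). specialize (Hc b). lia. }
  lia.
Qed.

End FarLimits.

Lemma shadow_of_infinite_atom {V} (adj : V -> V -> Prop)
  (Hsym : forall x y, adj x y -> adj y x) (Hlf : locally_finite adj) (Hconn : connected adj)
  B A : is_atom adj B A -> ~ finite_set A -> exists f, in_shadow adj B A f.
Proof.
  intros [o Ho] Hinf.
  destruct (far_limit_exists adj Hsym Hlf Hconn A o Hinf) as [f Hf].
  assert (near : forall S, exists x, A x /\ agree_on S (dfun adj x) f).
  { intros S. destruct (Hf S 0%nat) as (x & Ax & _ & Hx). exists x. split; auto.
    exists (dfun adj x o). intros b Hb. specialize (Hx b Hb). lia. }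
  exists f. split.
  - intros S. destruct (near S) as (x & _ & Hx). exists x. split; auto.
    apply (far_limit_not_same_class adj Hsym Hlf Hconn A o f Hf).
  - intros a Aa. destruct (near B) as (x & Ax & Hx).
    eapply agree_on_trans; [apply agree_on_sym, Hx|].
    eapply agree_on_trans; [apply Ho, Ax | apply agree_on_sym, Ho, Aa].
Qed.

Theorem mainTheorem15 (V : Type) (adj : V -> V -> Prop)
  (Hsym : forall x y, adj x y -> adj y x)
  (Hlf : locally_finite adj) (Hconn : connected adj)
  (B : list V) (A : V -> Prop) (HA : is_atom adj B A) :
  (exists f : V -> Z, in_shadow adj B A f) <-> ~ finite_set A.
Proof.
  split.
  - intros [f Hf]. exact (atom_infinite_of_shadow adj B A f HA Hf).
  - exact (shadow_of_infinite_atom adj Hsym Hlf Hconn B A HA).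
Qed.
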